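(* Let $(\xi,Q)$ be an RQSE random overlap structure such that $\overline{S_Q}$ has no limit points from below (for every $q\in\overline{S_Q}$, $\sup\{p\in\overline{S_Q}:p<q\}<q$), and let $\nu$ be a random measure directing $(\xi,Q)$. Then almost surely the support of $\nu$ is countable.
   Context: A random overlap structure (ROSt) is a random pair $(\xi,Q)$ with $\xi=(\xi_1\ge\xi_2\ge\cdots\ge0)$, $\sum\xi_i\le1$, and $Q=(q_{ij})$ a symmetric positive semidefinite $\mathbb{N}\times\mathbb{N}$ matrix with $q_{ii}=1$. $S_Q=\{q_{ij}:i\ne j\}$; $Q^{*r}=(q_{ij}^r)$. For $r\in\mathbb{N}$, $\lambda>0$, the map $\Phi_{r,\lambda}$: conditionally on $(\xi,Q)$ let $(\kappa_i)$ be centered Gaussian with covariance $Q^{*r}$, set $\xi'_i=\xi_ie^{\lambda\kappa_i}/\sum_j\xi_je^{\lambda\kappa_j}$ ($\xi'\equiv0$ if $\xi\equiv0$), let $\pi$ order $\xi'$ non-increasingly (ties by original index), and output $((\xi'_{\pi(i)}),(q_{\pi(i)\pi(j)}))$. The ROSt is RQSE if its law is invariant under all $\Phi_{r,\lambda}$ ($r\in\mathbb{N},\lambda>0$), is ergodic (extremal among laws invariant under these maps), and $S_Q\subseteq(-1,1)$. A random Borel probability measure $\nu$ on a separable Hilbert space $\mathcal{H}$ directs $(\xi,Q)$ if, conditionally on $\nu$, $Q$ has the law of $\big((\phi_i,\phi_j)+\delta_{ij}(1-\|\phi_i\|^2)\big)_{i,j}$ where $(\phi_i)$ is i.i.d.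 with law $\nu$. *)

From HB Require Import structures.
From mathcomp Require Import all_boot all_order all_algebra.
From mathcomp Require Import all_classical all_reals all_analysis.
From mathcomp Require Import measurable_realfun.
Set Implicit Arguments. Unset Strict Implicit. Unset Printing Implicit Defensive.
Import Order.TTheory GRing.Theory Num.Theory.
Import numFieldNormedType.Exports.
Local Open Scope classical_set_scope.
Local Open Scope ring_scope.

Section Defs.
Variable R : realType.

(* configuration (xi, Q) *)
Definition Conf := ((nat -> R) * (nat -> nat -> R))%type.

Definition conf_gen : set (set Conf) :=
  [set A | (exists i (B : set R), measurable B /\ A = (fun c : Conf => c.1 i) @^-1` B)
        \/ (exists i j (B : set R), measurable B /\ A = (fun c : Conf => c.2 i j) @^-1` B)].

Definition ConfM := g_sigma_algebraType conf_gen.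

Definition rost_valid (c : Conf) : Prop :=
  (forall i, 0 <= c.1 i) /\ (forall i, c.1 i.+1 <= c.1 i) /\
  (forall n, \sum_(i < n) c.1 i <= 1) /\
  (forall i j, c.2 i j = c.2 j i) /\ (forall i, c.2 i i = 1) /\
  (forall n (t : nat -> R), 0 <= \sum_(i < n) \sum_(j < n) t i * t j * c.2 i j).

Definition reweight (lam : R) (c : Conf) (kappa : nat -> R) : nat -> R :=
  if `[< forall i, c.1 i = 0 >] then (fun _ => 0)
  else (fun i => c.1 i * expR (lam * kappa i) /
                 fine (\sum_(j <oo) (c.1 j * expR (lam * kappa j))%:E)%E).

Definition prec (x : nat -> R) (j k : nat) : Prop :=
  x k < x j \/ (x j = x k /\ (j < k)%N).

Definition sortperm (x : nat -> R) (i : nat) : nat :=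
  xget 0%N [set j | @counting nat R [set k | prec x k j] = (i%:R)%:E].

Definition Phi (r : nat) (lam : R) (c : Conf) (kappa : nat -> R) : Conf :=
  let x := reweight lam c kappa in
  let p := sortperm x in
  ((fun i => x (p i)), (fun i j => c.2 (p i) (p j))).

Local Open Scope ereal_scope.

(* Conditionally on C, K is a centered Gaussian sequence with covariance
   matrix (C.2)^{*r}: characterised via conditional characteristic functions
   of all finite-dimensional marginals. *)
Definition cond_gaussian (r : nat) d (Om : measurableType d)
    (P : probability Om R) (C : Om -> ConfM) (K : Om -> nat -> R) : Prop :=
  forall (n : nat) (t : nat -> R) (B : set ConfM), measurable B ->
    (\int[P]_(w in C @^-1` B) (cos (\sum_(k < n) t k * K w k))%:E
     = \int[P]_(w in C @^-1` B)
         (expR (- (\sum_(j < n) \sum_(k < n) t j * t k * ((C w).2 j k) ^+ r) / 2))%:E)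
    /\ \int[P]_(w in C @^-1` B) (sin (\sum_(k < n) t k * K w k))%:E = 0.

Definition Phi_invariant (r : nat) (lam : R) (mu : probability ConfM R) : Prop :=
  forall d (Om : measurableType d) (P : probability Om R)
         (C : Om -> ConfM) (K : Om -> nat -> R),
    measurable_fun setT C ->
    (forall k, measurable_fun setT (fun w => K w k)) ->
    (forall B : set ConfM, measurable B -> P (C @^-1` B) = mu B) ->
    cond_gaussian r P C K ->
    forall B : set ConfM, measurable B ->
      P ((fun w => (Phi r lam (C w) (K w) : ConfM)) @^-1` B) = mu B.

Definition all_invariant (mu : probability ConfM R) : Prop :=
  forall (r : nat) (lam : R), (0 < r)%N -> (0 < lam)%R -> Phi_invariant r lam mu.

(* extremal among the laws invariant under all the maps Phi_{r,lam} *)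
Definition ergodic (mu : probability ConfM R) : Prop :=
  forall (mu1 mu2 : probability ConfM R) (s : R),
    all_invariant mu1 -> all_invariant mu2 -> (0 < s < 1)%R ->
    (forall B : set ConfM, measurable B -> mu B = s%:E * mu1 B + (1 - s)%:E * mu2 B) ->
    forall B : set ConfM, measurable B -> mu1 B = mu B.

Definition SQ (Q : nat -> nat -> R) : set R :=
  [set x | exists i j, i <> j /\ x = Q i j].

Definition RQSE (mu : probability ConfM R) : Prop :=
  all_invariant mu /\ ergodic mu /\
  {ae mu, forall c : ConfM, SQ c.2 `<=` [set x : R | (-1 < x < 1)%R]}.

Definition no_limit_from_below (S : set R) : Prop :=
  forall q, S q -> exists2 p, (p < q)%R & forall x, S x -> (x < q)%R -> (x <= p)%R.

End Defs.

Definition is_inner_product (R : realType) (H : normedModType R)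
  (ip : H -> H -> R) : Prop :=
  (forall x y, ip x y = ip y x) /\
  (forall (a : R) (x y z : H), ip (a *: x + y) z = (a * ip x z + ip y z)%R) /\
  (forall x, ip x x = (`|x| ^+ 2)%R).

Definition separable (T : topologicalType) : Prop :=
  exists D : set T, countable D /\ closure D = setT.

Definition Borel (T : topologicalType) := g_sigma_algebraType (@open T).

Section Directing.
Variables (R : realType) (H : completeNormedModType R) (ip : H -> H -> R).

Definition gram_entry (phi : nat -> H) (i j : nat) : R :=
  (ip (phi i) (phi j) + (if i == j then 1 - `|phi i| ^+ 2 else 0))%R.

Definition cons_seq (x : H) (phi : nat -> H) : nat -> H :=
  fun k => if k is k'.+1 then phi k' else x.

(* iter_int m n g = int m(dx_0) ... int m(dx_{n-1}) g(x_0,...,x_{n-1},...) *)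
Fixpoint iter_int (m : probability (Borel H) R) (n : nat)
  (g : (nat -> H) -> \bar R) : \bar R :=
  match n with
  | 0 => g (fun _ => point)
  | n'.+1 => \int[m]_(x in setT) iter_int m n' (fun phi => g (cons_seq x phi))
  end.

(* probability that the top-left n x n block of the Gram-type matrix built from
   i.i.d. m-samples lies in the box prod_{i,j<n} B i j *)
Definition gram_box_prob (m : probability (Borel H) R) (n : nat)
  (B : nat -> nat -> set R) : \bar R :=
  iter_int m n (fun phi =>
    (\1_[set phi' : nat -> H | forall i j, (i < n)%N -> (j < n)%N ->
                                  B i j (gram_entry phi' i j)] phi)%:E).

(* nu directs (xi, Q): conditionally on nu, Q has the law of the Gram-type matrix *)
Definition directs d (Om : measurableType d) (P : probability Om R)
  (nu : Om -> probability (Borel H) R) (X : Om -> ConfM R) : Prop :=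
  forall (n : nat) (B : nat -> nat -> set R) (E : set Om),
    (forall i j, measurable (B i j)) ->
    <<s [set (fun w => nu w A) @^-1` D | A in measurable & D in (measurable : set (set (\bar R)))] >> E ->
    P (E `&` [set w | forall i j, (i < n)%N -> (j < n)%N -> B i j ((X w).2 i j)])
    = (\int[P]_(w in E) gram_box_prob (nu w) n B)%E.

Definition measure_support (m : probability (Borel H) R) : set H :=
  [set x | forall U : set H, open U -> U x -> (0 < m U)%E].

End Directing.

From HB Require Import structures.
From mathcomp Require Import all_boot all_order all_algebra.
From mathcomp Require Import all_classical all_reals all_analysis.
From mathcomp Require Import measurable_realfun.
From mathcomp Require Import ring lra.

(* Let M be the support of nu.  Since nu directs Q, the off-diagonal overlaps
   are inner products of i.i.d. nu-samples, and the overlaps q_{2k,2k+1} come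
   from disjoint pairs of samples.  If two balls U, V both carry nu-mass at
   least delta, the probability that none of the first n of these overlaps
   falls in an interval containing ip(U x V) is at most (1 - delta^2)^n.
   Hence, almost surely, every inner product of two points of M lies in the
   closure of S_Q.  For x in M this applies to ip x x = |x|^2, and the gap of
   that closure below |x|^2 gives eta > 0 with ip x x <= ip x y for all y in M
   near x.  Two such points x, y close to each other coincide, as then
   |x - y|^2 <= 0; so M is a countable union of uniformly discrete subsets of
   a separable space. *)

Set Implicit Arguments.
Unset Strict Implicit.
Unset Printing Implicit Defensive.

Import Order.TTheory GRing.Theory Num.Theory.
Import numFieldNormedType.Exports.
Local Open Scope classical_set_scope.
Local Open Scope ring_scope.

Section InnerProduct.
Variables (R : realType) (H : normedModType R) (ip : H -> H -> R).
Hypothesis ipH : is_inner_product ip.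

Lemma ipC x y : ip x y = ip y x. Proof. by case: ipH. Qed.

Lemma ipxx x : ip x x = `|x| ^+ 2. Proof. by case: ipH => _ []. Qed.

Lemma ipZDl a x y z : ip (a *: x + y) z = a * ip x z + ip y z.
Proof. by case: ipH => _ []. Qed.

Lemma ipDl x y z : ip (x + y) z = ip x z + ip y z.
Proof. by have := ipZDl 1 x y z; rewrite scale1r mul1r. Qed.

Lemma ip0l z : ip 0 z = 0.
Proof. by have := ipDl 0 0 z; rewrite addr0; lra. Qed.

Lemma ipNl x z : ip (- x) z = - ip x z.
Proof. by have := ipZDl (-1) x 0 z; rewrite addr0 scaleN1r ip0l addr0 mulN1r. Qed.

Lemma ipBl x y z : ip (x - y) z = ip x z - ip y z.
Proof. by rewrite ipDl ipNl. Qed.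

Lemma ipDr x y z : ip z (x + y) = ip z x + ip z y.
Proof. by rewrite ipC ipDl ipC (ipC y). Qed.

Lemma ipBr x y z : ip z (x - y) = ip z x - ip z y.
Proof. by rewrite ipC ipBl ipC (ipC y). Qed.

Lemma normrD_sqr x y : `|x + y| ^+ 2 = `|x| ^+ 2 + 2 * ip x y + `|y| ^+ 2.
Proof. by rewrite -!ipxx ipDl !ipDr (ipC y x); ring. Qed.

Lemma normrB_sqr x y : `|x - y| ^+ 2 = `|x| ^+ 2 - 2 * ip x y + `|y| ^+ 2.
Proof. by rewrite -!ipxx ipBl !ipBr (ipC y x); ring. Qed.

(* Cauchy-Schwarz, read off from the triangle inequality squared. *)
Lemma ip_le_normM x y : ip x y <= `|x| * `|y|.
Proof.
have : `|x + y| ^+ 2 <= (`|x| + `|y|) ^+ 2.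
  by rewrite lerXn2r ?nnegrE ?addr_ge0 // ler_normD.
rewrite normrD_sqr; nra.
Qed.

Lemma normr_ip_le x y : `|ip x y| <= `|x| * `|y|.
Proof.
rewrite ler_norml ip_le_normM andbT.
by have := ip_le_normM (- x) y; rewrite ipNl normrN; lra.
Qed.

Lemma ip_continuous_eps x y t : 0 < t -> exists2 eta, 0 < eta &
  forall u v, `|u - x| < eta -> `|v - y| < eta -> `|ip u v - ip x y| < t.
Proof.
move=> t0; set M := `|x| + `|y| + 2.
have M0 : 0 < M by rewrite /M; have := normr_ge0 x; have := normr_ge0 y; lra.
exists (Num.min 1 (t / M)); first by rewrite lt_min ltr01 divr_gt0.
move=> u v; set e := Num.min 1 (t / M) => hu hv.
have e1 : e <= 1 by rewrite ge_min lexx.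
have eM : e * M <= t by rewrite -ler_pdivlMr // ge_min lexx orbT.
have -> : ip u v - ip x y = ip (u - x) v + ip x (v - y) by rewrite ipBl ipBr; ring.
apply: le_lt_trans (ler_normD _ _) _.
have c1 := normr_ip_le (u - x) v; have c2 := normr_ip_le x (v - y).
have nv : `|v| <= `|y| + `|v - y| by rewrite -[v in `|v|](subrKC y) ler_normD.
have nx := normr_ge0 x; have ny := normr_ge0 y.
have n1 := normr_ge0 (u - x); have n2 := normr_ge0 (v - y).
rewrite /M in eM; nra.
Qed.

Lemma ip_self_le_eq x y : ip x x <= ip x y -> ip y y <= ip y x -> x = y.
Proof.
move=> hx hy; apply/eqP; rewrite -subr_eq0 -normr_eq0 -sqrf_eq0.
rewrite eq_le sqr_ge0 andbT normrB_sqr -!ipxx (ipC y x) in hy *; lra.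
Qed.

End InnerProduct.

Section DenseSequence.
Variables (R : realType) (H : normedModType R).

Definition dense_seq (e : nat -> H) :=
  forall x eps, 0 < eps -> exists i, `|x - e i| < eps.

Lemma separable_dense_seq : separable H -> exists e, dense_seq e.
Proof.
move=> [D [cD clD]]; have /countable_injP [f finj] := cD.
pose e i := xget 0 [set x | D x /\ f x = i].
exists e => x eps e0.
have : closure D x by rewrite clD.
move=> /(_ (ball x eps)) [|y [Dy xy]]; first exact: nbhsx_ballx.
exists (f y); have -> : e (f y) = y.
  have [Dz fz] : D (e (f y)) /\ f (e (f y)) = f y.
    by apply: (@xgetPex _ 0 [set x | D x /\ f x = f y]); exists y.
  by apply: finj; rewrite ?inE.
by move: xy; rewrite -ball_normE.
Qed.

End DenseSequence.

Section RealGaps.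
Variable R : realType.

Lemma exists_natSinv_lt (eta : R) : 0 < eta -> exists n : nat, n.+1%:R^-1 < eta.
Proof.
move=> eta0; exists (Num.truncn eta^-1).
by rewrite invf_plt ?posrE // ?truncnS_gt // ltr0Sn.
Qed.

Lemma closure_normr_approx (S : set R) r :
  (forall e : R, 0 < e -> exists2 s, S s & `|r - s| < e) -> closure S r.
Proof.
move=> h B /nbhs_ballP [e e0 eB]; have [s Ss rs] := h e e0.
by exists s; split => //; apply: eB; rewrite -ball_normE.
Qed.

Lemma no_limit_from_below_gap (C : set R) q : no_limit_from_below C -> C q ->
  exists2 g, 0 < g & forall c, C c -> `|c - q| < g -> q <= c.
Proof.
move=> nlC Cq; have [p pq hp] := nlC q Cq.
exists (q - p) => [|c Cc]; first by rewrite subr_gt0.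
rewrite ltr_norml => /andP[pc _]; rewrite leNgt; apply/negP => cq.
by have := hp c Cc cq; lra.
Qed.

End RealGaps.

Section DiscreteSets.
Variables (R : realType) (H : normedModType R) (ip : H -> H -> R).
Hypotheses (ipH : is_inner_product ip) (sepH : separable H).

Lemma countable_uniformly_discrete (A : set H) (r : R) : 0 < r ->
  (forall x y, A x -> A y -> `|x - y| < r -> x = y) -> countable A.
Proof.
move=> r0 discA; have [e de] := separable_dense_seq sepH; apply/countable_injP.
pose near_idx x := xget 0%N [set i | `|x - e i| < r / 2].
have near_idxP x : `|x - e (near_idx x)| < r / 2.
  by apply: (@xgetPex _ 0%N [set i | `|x - e i| < r / 2]); apply: de; lra.
exists near_idx => x y /set_mem Ax /set_mem Ay xy; apply: discA => //.
have := ler_normD (x - e (near_idx x)) (e (near_idx y) - y).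
rewrite xy addrA subrK => le_xy; apply: le_lt_trans le_xy _.
have := near_idxP y; rewrite distrC; have := near_idxP x; rewrite xy; lra.
Qed.

Lemma countable_ip_no_limit_from_below (M : set H) (C : set R) :
  (forall x y, M x -> M y -> C (ip x y)) -> no_limit_from_below C -> countable M.
Proof.
move=> ipM nlC.
pose locmin x eta := forall y, M y -> `|y - x| < eta -> ip x x <= ip x y.
pose A n := [set x | M x /\ exists2 eta, n.+1%:R^-1 < eta & locmin x eta].
have MA : M `<=` \bigcup_(n in setT) A n.
  move=> x Mx; have [g g0 hg] := no_limit_from_below_gap nlC (ipM x x Mx Mx).
  have [eta eta0 heta] := ip_continuous_eps ipH x x g0.
  have [n hn] := exists_natSinv_lt eta0.
  exists n => //; split => //; exists eta => // y My yx.
  by apply: hg; [exact: ipM | apply: heta; rewrite ?subrr ?normr0].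
apply: sub_countable (subset_card_le MA) _; apply: bigcup_countable => // n _.
apply: (@countable_uniformly_discrete _ n.+1%:R^-1); first by rewrite invr_gt0.
move=> x y [Mx [ex hex locx]] [My [ey hey locy]] xy.
apply: (ip_self_le_eq ipH).
  by apply: locx => //; rewrite distrC; exact: lt_trans hex.
by apply: locy => //; exact: lt_trans hey.
Qed.

End DiscreteSets.

Section BallPairs.
Variables (R : realType) (H : completeNormedModType R) (ip : H -> H -> R).

Definition ball_pair_witnessed (m : probability (Borel H) R) (S : set R)
    (a b : H) (rho t : R) :=
  (forall u v, ball a rho u -> ball b rho v -> ball (ip a b) t (ip u v)) ->
  (0 < m (ball a rho))%E -> (0 < m (ball b rho))%E -> S `&` ball (ip a b) t !=set0.

Lemma ip_support_closure (m : probability (Borel H) R) (S : set R) (e : nat -> H) :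
  is_inner_product ip -> dense_seq e ->
  (forall i j k l, ball_pair_witnessed m S (e i) (e j) k.+1%:R^-1 l.+1%:R^-1) ->
  forall x y, measure_support m x -> measure_support m y -> closure S (ip x y).
Proof.
move=> ipH de witnessed x y Mx My; apply: closure_normr_approx => eps eps0.
have [l lt_eps] := exists_natSinv_lt (divr_gt0 eps0 (ltr0Sn _ 1)).
set t := l.+1%:R^-1 in lt_eps witnessed; have t0 : 0 < t by rewrite invr_gt0.
have [eta eta0 ip_near] := ip_continuous_eps ipH x y (divr_gt0 t0 (ltr0Sn _ 1)).
have [k lt_eta] := exists_natSinv_lt (divr_gt0 eta0 (ltr0Sn _ 1)).
set rho := k.+1%:R^-1 in lt_eta witnessed; have rho0 : 0 < rho by rewrite invr_gt0.
have [i xi] := de x rho rho0; have [j yj] := de y rho rho0.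
have ip_ball u v : `|e i - u| < rho -> `|e j - v| < rho -> `|ip u v - ip x y| < t / 2.
  move=> iu jv; apply: ip_near.
    by apply: (le_lt_trans (ler_distD (e i) _ _)); rewrite distrC (distrC _ x); lra.
  by apply: (le_lt_trans (ler_distD (e j) _ _)); rewrite distrC (distrC _ y); lra.
have ip_eij : `|ip (e i) (e j) - ip x y| < t / 2 by apply: ip_ball; rewrite subrr normr0.
have incl u v : ball (e i) rho u -> ball (e j) rho v -> ball (ip (e i) (e j)) t (ip u v).
  rewrite -!ball_normE /ball_ => iu jv.
  apply: (le_lt_trans (ler_distD (ip x y) _ _)).
  by have := ip_ball u v iu jv; rewrite (distrC (ip x y)); lra.
have charged z w : measure_support m z -> `|w - z| < rho -> (0 < m (ball w rho))%E.
  by move=> Mz wz; apply: Mz; [exact: ball_open | rewrite -ball_normE].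
have mi : (0 < m (ball (e i) rho))%E by apply: (charged x); rewrite // distrC.
have mj : (0 < m (ball (e j) rho))%E by apply: (charged y); rewrite // distrC.
have [s [Ss]] := witnessed i j k l incl mi mj.
rewrite -ball_normE /ball_ /= -/t => eij_s; exists s => //.
by apply: (le_lt_trans (ler_distD (ip (e i) (e j)) _ _)); rewrite distrC; lra.
Qed.

End BallPairs.

Section NonmeasurableIntegral.
Local Open Scope ereal_scope.
Context d (T : measurableType d) (R : realType).

(* The integrands built by iter_int need not be measurable; monotonicity holds
   anyway, as the integral of a nonnegative function is the supremum of the
   integrals of the simple functions below it. *)
Lemma ge0_le_integral_nonmeas (mu : {measure set T -> \bar R}) (D : set T)
    (f g : T -> \bar R) :
  (forall x, D x -> 0 <= f x) -> (forall x, D x -> f x <= g x) ->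
  \int[mu]_(x in D) f x <= \int[mu]_(x in D) g x.
Proof.
move=> f0 fg.
have g0 x : D x -> 0 <= g x by move=> Dx; exact: le_trans (f0 x Dx) (fg x Dx).
rewrite (ge0_integralE _ f0) (ge0_integralE _ g0).
apply: ge_ereal_sup => _ [h hf <-]; apply: ereal_sup_ubound; exists h => //= x.
apply: le_trans (hf x) _; rewrite /patch; case: ifP => // /set_mem Dx.
exact: fg.
Qed.

Lemma probability_EFin (mu : probability T R) (A : set T) :
  measurable A -> exists r : R, mu A = r%:E.
Proof. by move=> mA; exists (fine (mu A)); rewrite fineK ?fin_num_measure. Qed.

Lemma integral_scale_indic (mu : probability T R) (A : set T) (k : R) :
  (0 <= k)%R -> measurable A ->
  \int[mu]_(x in setT) (k * \1_A x)%:E = k%:E * mu A.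
Proof.
move=> k0 mA; rewrite (@integralZl_indic _ _ _ mu setT measurableT (fun=> A)) //.
  by rewrite integral_indic // setIT.
by move=> kn; have := le_lt_trans k0 kn; rewrite ltxx.
Qed.

End NonmeasurableIntegral.

Section IteratedIntegral.
Variables (R : realType) (H : completeNormedModType R) (m : probability (Borel H) R).
Local Open Scope ereal_scope.

Lemma iter_int_ge0 n g : (forall phi, 0 <= g phi) -> 0 <= iter_int m n g.
Proof.
elim: n g => [|n IH] g g0 /=; first exact: g0.
by apply: integral_ge0 => x _; apply: IH.
Qed.

Lemma iter_int0 n : iter_int m n (fun _ => 0) = 0.
Proof. by elim: n => [//|n IH] /=; rewrite IH integral0. Qed.

Definition pairs_avoid (ip : H -> H -> R) (T : set R) (n : nat) : set (nat -> H) :=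
  [set phi | forall k, (k < n)%N -> ~ T (ip (phi k.*2) (phi k.*2.+1))].

Lemma pairs_avoidS ip T n x y phi :
  pairs_avoid ip T n.+1 (cons_seq x (cons_seq y phi)) <->
  ~ T (ip x y) /\ pairs_avoid ip T n phi.
Proof.
split => [avoid|[Txy avoid] [|k] //= kn]; last exact: avoid.
by split => [|k kn]; [exact: (avoid 0%N) | exact: (avoid k.+1)].
Qed.

Lemma iter_int_pairs_avoidS ip T n x y :
  iter_int m n.*2
    (fun phi => (\1_(pairs_avoid ip T n.+1) (cons_seq x (cons_seq y phi)))%:E) =
  (\1_(~` T) (ip x y))%:E *
  iter_int m n.*2 (fun phi => (\1_(pairs_avoid ip T n) phi)%:E).
Proof.
have [Txy|nTxy] := pselect (T (ip x y)).
  rewrite indicE memNset ?mul0e; last by move/(_ Txy).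
  rewrite -(iter_int0 n.*2); congr iter_int; apply: funext => phi.
  by rewrite indicE memNset // => /pairs_avoidS[].
rewrite indicE mem_set // mul1e; congr iter_int; apply: funext => phi.
rewrite !indicE; suff -> : (cons_seq x (cons_seq y phi) \in pairs_avoid ip T n.+1) =
  (phi \in pairs_avoid ip T n) by [].
by apply/idP/idP => /set_mem avoid; apply/mem_set;
  [case/pairs_avoidS: avoid | exact/pairs_avoidS].
Qed.

Section PairBound.
Variables (ip : H -> H -> R) (T : set R) (U V : set (Borel H)).
Hypotheses (mU : measurable U) (mV : measurable V).
Hypothesis ipUV : forall u v, U u -> V v -> T (ip u v).
Variable dl : R.
Hypotheses (dl0 : (0 <= dl)%R) (dlU : dl%:E <= m U) (dlV : dl%:E <= m V).

Lemma integral_avoid_le (K : R) x : (0 <= K)%R ->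
  \int[m]_(y in setT) (\1_(~` T) (ip x y) * K)%:E <=
  ((K * (1 - dl)) * \1_U x + K * \1_(~` U) x)%:E.
Proof.
move=> K0; have ind_le1 (Z : Type) (A : set Z) z : (\1_A z <= 1 :> R)%R.
  by rewrite indicE; case: (_ \in _).
have [Ux|nUx] := pselect (U x).
  rewrite [\1_U x]indicE mem_set // indicE memNset /=; last by move/(_ Ux).
  rewrite mulr1 mulr0 addr0.
  apply: (@le_trans _ _ (\int[m]_(y in setT) (K * \1_(~` V) y)%:E)).
    apply: ge0_le_integral_nonmeas => y _; first by rewrite lee_fin mulr_ge0.
    rewrite lee_fin mulrC; apply: ler_wpM2l => //; have [Vy|nVy] := pselect (V y).
      by rewrite indicE memNset // => /(_ (ipUV Ux Vy)).
    by rewrite [X in (_ <= X)%R]indicE mem_set //; exact: ind_le1.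
  rewrite integral_scale_indic //; last exact: measurableC.
  rewrite probability_setC //.
  have [v mVv] := probability_EFin m mV.
  by rewrite mVv -EFinB -EFinM lee_fin ler_wpM2l // lerB // -lee_fin -mVv.
rewrite !indicE memNset // mem_set // mulr0 add0r mulr1.
apply: (@le_trans _ _ (\int[m]_(y in setT) (cst K%:E) y)).
  apply: ge0_le_integral_nonmeas => y _; first by rewrite lee_fin mulr_ge0.
  by rewrite /= lee_fin ler_piMl.
rewrite integral_cst // -[leRHS]mule1 lee_wpmul2l ?lee_fin //.
exact: probability_le1.
Qed.

Lemma integral_step_le (K : R) : (0 <= K)%R ->
  \int[m]_(x in setT) ((K * (1 - dl)) * \1_U x + K * \1_(~` U) x)%:E <=
  (K * (1 - dl ^+ 2))%:E.
Proof.
move=> K0; have [u mUu] := probability_EFin m mU.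
have u1 : (u <= 1)%R by rewrite -lee_fin -mUu probability_le1.
have dlu : (dl <= u)%R by rewrite -lee_fin -mUu.
have K1 : (0 <= K * (1 - dl))%R by rewrite mulr_ge0 // subr_ge0 (le_trans dlu).
have mCU : measurable (~` U) by exact: measurableC.
under eq_integral do rewrite EFinD.
rewrite ge0_integralD //; last 4 first.
- by move=> x _; rewrite lee_fin mulr_ge0.
- by apply/measurable_EFinP/measurable_funM => //; exact: measurable_indic.
- by move=> x _; rewrite lee_fin mulr_ge0.
- by apply/measurable_EFinP/measurable_funM => //; exact: measurable_indic.
rewrite !integral_scale_indic // probability_setC // mUu -EFinB -!EFinM -EFinD lee_fin.
have : (0 <= K * dl * (u - dl))%R by rewrite !mulr_ge0 // subr_ge0.
by nra.
Qed.

Lemma iter_int_pairs_avoid_le n :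
  iter_int m n.*2 (fun phi => (\1_(pairs_avoid ip T n) phi)%:E) <=
  ((1 - dl ^+ 2) ^+ n)%:E.
Proof.
elim: n => [|n IH]; first by rewrite /= expr0 lee_fin indicE; case: (_ \in _).
have dl1 : (dl <= 1)%R by rewrite -lee_fin (le_trans dlU) ?probability_le1.
have K0 : (0 <= (1 - dl ^+ 2) ^+ n)%R by rewrite exprn_ge0 // subr_ge0 exprn_ile1.
rewrite doubleS /= exprSr.
apply: le_trans (integral_step_le K0).
apply: ge0_le_integral_nonmeas => x _.
  by apply: integral_ge0 => y _; apply: iter_int_ge0 => phi; rewrite lee_fin.
apply: le_trans (integral_avoid_le x K0).
apply: ge0_le_integral_nonmeas => y _.
  by apply: iter_int_ge0 => phi; rewrite lee_fin.
by rewrite iter_int_pairs_avoidS EFinM lee_wpmul2l.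
Qed.

End PairBound.
End IteratedIntegral.

Lemma le_geometric_eq0 (R : realType) (x : \bar R) (r : R) :
  (0 <= x)%E -> 0 <= r -> r < 1 -> (forall n, (x <= (r ^+ n)%:E)%E) -> x = 0%E.
Proof.
move=> x0 r0 r1 le_x.
have [c xc] : exists c, x = c%:E.
  exists (fine x); rewrite fineK // ge0_fin_numE //.
  by apply: le_lt_trans (le_x 0%N) _; rewrite ltry.
move: x0 le_x; rewrite xc lee_fin => c0 le_c; congr (_%:E).
have {}le_c n : c <= r ^+ n by rewrite -lee_fin.
apply/eqP; rewrite eq_le c0 andbT leNgt; apply/negP => c_gt0.
have r_cvg : (GRing.exp r : R ^nat) @ \oo --> 0 by apply: cvg_expr; rewrite ger0_norm.
have [N _ hN] := cvgr0_norm_lt _ r_cvg c c_gt0.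
have := hN N (leqnn N); rewrite /= ger0_norm ?exprn_ge0 // => rN_lt.
by have := le_lt_trans (le_c N) rN_lt; rewrite ltxx.
Qed.

Section GramPairs.
Variables (R : realType) (H : completeNormedModType R) (ip : H -> H -> R).

(* The box constraining exactly the overlaps q_{2k,2k+1}, which come from
   disjoint, hence independent, pairs of samples. *)
Definition pair_box (T : set R) (i j : nat) : set R :=
  if odd j && (i == j.-1) then ~` T else setT.

Lemma gram_box_pair_box (m : probability (Borel H) R) T n :
  gram_box_prob ip m n.*2 (pair_box T) =
  iter_int m n.*2 (fun phi => (\1_(pairs_avoid ip T n) phi)%:E).
Proof.
rewrite /gram_box_prob; congr iter_int; apply: funext => phi; congr (_%:E).
congr (\1_ _ _); apply/seteqP; split => psi /= avoid.
  move=> k kn; have := avoid k.*2 k.*2.+1.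
  rewrite /pair_box /gram_entry /= odd_double eqxx /= eqn_leq ltnn andbF addr0.
  by apply; rewrite ?ltn_double ?ltn_Sdouble.
move=> i j i_lt j_lt; rewrite /pair_box; case: ifP => [/andP[oj /eqP ij]|_] //.
have ej : j = (j./2).*2.+1 by rewrite -[LHS]odd_double_half oj.
have kn : (j./2 < n)%N by rewrite -ltn_Sdouble -ej.
move: ej kn; set k := j./2 => ej kn.
rewrite ij ej /gram_entry /= eqn_leq ltnn andbF addr0.
exact: avoid.
Qed.

End GramPairs.

Section DirectedOverlaps.
Variables (R : realType) (d : measure_display) (Om : measurableType d)
  (P : probability Om R) (X : Om -> ConfM R)
  (H : completeNormedModType R) (ip : H -> H -> R)
  (nu : Om -> probability (Borel H) R).
Hypotheses (mX : measurable_fun setT X) (dirX : directs ip P nu X).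
Hypothesis mnu :
  forall A : set (Borel H), measurable A -> measurable_fun setT (fun w => nu w A).

Let nu_events := <<s [set (fun w => nu w A) @^-1` D |
  A in measurable & D in (measurable : set (set (\bar R)))] >>.

Let nu_eventsI A B : nu_events A -> nu_events B -> nu_events (A `&` B).
Proof. exact: (@measurableI _ (g_sigma_algebraType _)). Qed.

Let nu_gtE (A : set (Borel H)) (r : R) : [set w | (r%:E < nu w A)%E] =
  (fun w => nu w A) @^-1` [set` Interval (BRight r%:E) (BRight +oo%E)].
Proof. by apply/seteqP; split => w /=; rewrite in_itv /= leey andbT. Qed.

Lemma nu_events_gt (A : set (Borel H)) (r : R) :
  measurable A -> nu_events [set w | (r%:E < nu w A)%E].
Proof.
move=> mA; apply: sub_sigma_algebra; exists A => //.
exists [set` Interval (BRight r%:E) (BRight +oo%E)]; last by rewrite nu_gtE.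
exact: emeasurable_itv.
Qed.

Lemma measurable_nu_gt (A : set (Borel H)) (r : R) :
  measurable A -> measurable [set w | (r%:E < nu w A)%E].
Proof.
move=> mA; rewrite nu_gtE -[X in measurable X]setTI.
exact: (mnu mA measurableT (emeasurable_itv _)).
Qed.

Section HitOverlaps.
Variables (U V : set (Borel H)) (T : set R).
Hypotheses (mU : measurable U) (mV : measurable V) (mT : measurable T).
Hypothesis ipUV : forall u v, U u -> V v -> T (ip u v).

Let charged (p : nat) : set Om :=
  [set w | (p.+1%:R^-1%:E < nu w U)%E] `&` [set w | (p.+1%:R^-1%:E < nu w V)%E].

Let avoid (n : nat) : set Om :=
  [set w | forall i j, (i < n.*2)%N -> (j < n.*2)%N -> pair_box T i j ((X w).2 i j)].

Let measurable_charged p : measurable (charged p).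
Proof. by apply: measurableI; exact: measurable_nu_gt. Qed.

Let measurable_pair_box i j : measurable (pair_box T i j).
Proof.
by rewrite /pair_box; case: ifP => _; [exact: measurableC | exact: measurableT].
Qed.

Lemma measurable_avoid n : measurable (avoid n).
Proof.
pose B i j := [set x : R | (i < n.*2)%N -> (j < n.*2)%N -> pair_box T i j x].
have -> : avoid n =
    X @^-1` \bigcap_i \bigcap_j ((fun c : ConfM R => c.2 i j) @^-1` B i j).
  apply/seteqP; split => w /= avoid_w => [i _ j _|i j]; exact: avoid_w.
rewrite -[X in measurable X]setTI; apply: mX => //.
apply: bigcapT_measurable => i; apply: bigcapT_measurable => j.
apply: sub_sigma_algebra; right; exists i, j, (B i j); split => //.
have [ij_lt|ij_ge] := boolP ((i < n.*2)%N && (j < n.*2)%N).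
  have -> : B i j = pair_box T i j.
    by case/andP: ij_lt => i_lt j_lt; apply/seteqP; split => x /= h //; exact: h.
  exact: measurable_pair_box.
have -> : B i j = setT.
  by apply/seteqP; split => x // _ i_lt j_lt; move: ij_ge; rewrite i_lt j_lt.
exact: measurableT.
Qed.

Lemma charged_avoid_le p n :
  (P (charged p `&` avoid n) <= ((1 - p.+1%:R^-1 ^+ 2) ^+ n)%:E)%E.
Proof.
set dl : R := p.+1%:R^-1; have dl0 : 0 <= dl by rewrite invr_ge0.
have K0 : 0 <= (1 - dl ^+ 2) ^+ n.
  by rewrite exprn_ge0 // subr_ge0 exprn_ile1 // invf_le1 ?ler1n ?ltr0Sn.
rewrite dirX //; last exact: nu_eventsI (nu_events_gt _ mU) (nu_events_gt _ mV).
apply: (@le_trans _ _ (\int[P]_(w in charged p) (cst ((1 - dl ^+ 2) ^+ n)%:E) w)%E).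
  apply: ge0_le_integral_nonmeas => w [chU chV].
    by apply: iter_int_ge0 => phi; rewrite lee_fin.
  rewrite gram_box_pair_box; apply: (iter_int_pairs_avoid_le mU mV ipUV dl0).
    exact: ltW.
  exact: ltW.
rewrite integral_cst // -[leRHS]mule1 lee_wpmul2l ?lee_fin //.
exact: probability_le1.
Qed.

Lemma ae_overlap_hits : {ae P, forall w,
  (0 < nu w U)%E -> (0 < nu w V)%E -> SQ (X w).2 `&` T !=set0}.
Proof.
pose M p := \bigcap_n (charged p `&` avoid n).
have mM p : measurable (M p).
  by apply: bigcapT_measurable => n; apply: measurableI => //; exact: measurable_avoid.
have PM0 p : P (M p) = 0%E.
  have dl_gt0 : 0 < p.+1%:R^-1 :> R by rewrite invr_gt0.
  have dl_le1 : p.+1%:R^-1 <= 1 :> R by rewrite invf_le1 ?ler1n ?ltr0Sn.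
  apply: (@le_geometric_eq0 _ _ (1 - p.+1%:R^-1 ^+ 2)); first exact: measure_ge0.
  - by rewrite subr_ge0 exprn_ile1 // invr_ge0.
  - by rewrite ltrBlDr ltrDl exprn_gt0.
  move=> n; apply: le_trans (charged_avoid_le p n); apply: le_measure; rewrite ?inE //.
    by apply: measurableI => //; exact: measurable_avoid.
  by move=> w /(_ n I).
apply: (@negligibleS _ _ _ P (\bigcup_p M p)); last first.
  by apply: negligible_bigcup => p; apply/negligibleP; [exact: mM | exact: PM0].
move=> w /= /not_implyP[wU /not_implyP[wV no_hit]].
have [u nuU] := probability_EFin (nu w) mU.
have [v nuV] := probability_EFin (nu w) mV.
rewrite nuU lte_fin in wU; rewrite nuV lte_fin in wV.
have uv0 : 0 < Num.min u v by rewrite lt_min wU wV.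
have [p] := exists_natSinv_lt uv0; rewrite lt_min => /andP[pu pv].
exists p => // n _; split; first by rewrite /charged /= nuU nuV !lte_fin pu pv.
move=> i j _ _; rewrite /pair_box; case: ifP => [/andP[oj /eqP ij]|_] // Tij.
apply: no_hit; exists ((X w).2 i j); split => //; exists i, j; split => //.
by rewrite ij; case: j oj {ij Tij} => //= j _ /eqP; rewrite eqn_leq ltnn.
Qed.

End HitOverlaps.

Lemma ae_ball_pair_witnessed a b rho t :
  {ae P, forall w, ball_pair_witnessed ip (nu w) (SQ (X w).2) a b rho t}.
Proof.
have mball (c : H) : measurable (ball c rho : set (Borel H)).
  by apply: sub_sigma_algebra; exact: ball_open.
have [ipUV|nipUV] := pselect (forall u v, ball a rho u -> ball b rho v ->
    ball (ip a b) t (ip u v)); last by apply: aeW => w /nipUV.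
apply: filterS (ae_overlap_hits (mball a) (mball b) (measurable_ball _ _) ipUV).
by move=> w hit _; exact: hit.
Qed.

End DirectedOverlaps.

Theorem lemma4p2 (R : realType) (d : measure_display) (Om : measurableType d)
  (P : probability Om R) (mu : probability (ConfM R) R) (X : Om -> ConfM R)
  (H : completeNormedModType R) (ip : H -> H -> R)
  (nu : Om -> probability (Borel H) R) :
  measurable_fun setT X ->
  (forall w, rost_valid (X w)) ->
  (forall B : set (ConfM R), measurable B -> P (X @^-1` B) = mu B) ->
  RQSE mu ->
  {ae P, forall w, no_limit_from_below (closure (SQ (X w).2))} ->
  is_inner_product ip -> separable H ->
  (forall A : set (Borel H), measurable A -> measurable_fun setT (fun w => nu w A)) ->
  directs ip P nu X ->
  {ae P, forall w, countable (measure_support (nu w))}.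
Proof.
move=> mX _ _ _ nlQ ipH sepH mnu dirX.
have [e de] := separable_dense_seq sepH.
have witnessed : {ae P, forall w, forall i j k l,
    ball_pair_witnessed ip (nu w) (SQ (X w).2) (e i) (e j) k.+1%:R^-1 l.+1%:R^-1}.
  by do 4 apply: ae_foralln => ?; exact: ae_ball_pair_witnessed.
apply: filterS2 witnessed nlQ => w witnessed_w nlQw.
apply: (countable_ip_no_limit_from_below ipH sepH _ nlQw).
exact: ip_support_closure ipH de witnessed_w.
Qed.
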